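(* Let $\mathcal{H}^c_{A_{n-1}}$ be the degenerate affine Hecke–Clifford algebra of type $A_{n-1}$ and let $w_{(n)}=s_1s_2\cdots s_{n-1}$, the $n$-cycle $(1\,2\,\cdots\,n)$. For every subset $I\subseteq\{1,\dots,n\}$ with $|I|$ even there is $\epsilon\in\{1,-1\}$ with $w_{(n)}c_I-\epsilon\, w_{(n)}\in[\mathcal{H}^c_{A_{n-1}},\mathcal{H}^c_{A_{n-1}}]$.
   Context: $\mathcal{H}^c_{A_{n-1}}$ (parameter $u\in\mathbb{C}$) is the $\mathbb{C}$-algebra generated by commuting $x_1,\dots,x_n$, Clifford generators $c_1,\dots,c_n$ ($c_i^2=1$, $c_ic_j=-c_jc_i$ for $i\ne j$) and the symmetric group $S_n$ (simple reflections $s_i=(i,i+1)$), with $\mathbb{C}[x]$, the Clifford algebra and $\mathbb{C}S_n$ subalgebras and relations $x_ic_i=-c_ix_i$, $x_ic_j=c_jx_i$ ($i\ne j$), $\sigma c_i=c_{\sigma(i)}\sigma$ ($\sigma\in S_n$), $x_{i+1}s_i-s_ix_i=u(1-c_{i+1}c_i)$, $x_js_i=s_ix_j$ ($j\ne i,i+1$). For $I=\{i_1<\dots<i_m\}$, $c_I=c_{i_1}\cdots c_{i_m}$. $[H,H]$ denotes the linear span of all commutators $hh'-h'h$. *)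

From HB Require Import structures.
From mathcomp Require Import all_boot all_order all_algebra all_fingroup.
From mathcomp Require Import complex Rstruct.
Set Implicit Arguments. Unset Strict Implicit. Unset Printing Implicit Defensive.
Import GRing.Theory.
Local Open Scope ring_scope.

Definition CC : rcfType := Rdefinitions.R.
Notation Cplx := (complex CC).

(* c_I = c_{i_1} ... c_{i_m} with i_1 < ... < i_m (the big product over a
   subset of 'I_n runs in increasing order). *)
Definition cI (A : pzRingType) (n : nat) (c : 'I_n -> A) (I : {set 'I_n}) : A :=
  \prod_(i in I) c i.

Definition in_comm_span (A : algType Cplx) (v : A) : Prop :=
  exists s : seq (Cplx * A * A),
    v = \sum_(t <- s) t.1.1 *: (t.1.2 * t.2 - t.2 * t.1.2).

(* The n-cycle (1 2 ... n) : i |-> i+1 mod n (0-based indices). *)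
Definition ncycle (n : nat) : {perm 'I_n} := perm (@ordS_inj n).

(* MathComp's permutation product satisfies (s * t) k = t (s k), i.e. s * t is
   the composite "t after s", so a homomorphism from S_n (composition of
   functions) satisfies sigma (s * t) = sigma t * sigma s. *)
Definition HC_relations (n : nat) (u : Cplx) (A : algType Cplx)
  (x c : 'I_n -> A) (sigma : {perm 'I_n} -> A) : Prop :=
      (forall i j, x i * x j = x j * x i) /\
      (forall i, c i * c i = 1) /\
      (forall i j, i != j -> c i * c j = - (c j * c i)) /\
      sigma 1%g = 1 /\ (forall s t, sigma (s * t)%g = sigma t * sigma s) /\
      (forall i, x i * c i = - (c i * x i)) /\
      (forall i j, i != j -> x i * c j = c j * x i) /\
      (forall (s : {perm 'I_n}) i, sigma s * c i = c (s i) * sigma s) /\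
      (forall i j : 'I_n, val j = (val i).+1 ->
         x j * sigma (tperm i j) - sigma (tperm i j) * x i = u *: (1 - c j * c i)) /\
      (forall i j k : 'I_n, val j = (val i).+1 -> k != i -> k != j ->
         x k * sigma (tperm i j) = sigma (tperm i j) * x k).

From HB Require Import structures.
From mathcomp Require Import all_boot all_order all_algebra all_fingroup.
From mathcomp Require Import complex Rstruct.
Set Implicit Arguments.
Unset Strict Implicit.
Unset Printing Implicit Defensive.

Import GRing.Theory.
Local Open Scope ring_scope.

(* Modulo commutators, [w X] is congruent to [c_j w X c_j] because [c_j^2 = 1].
   Taking [X = c_a P] and [j = w(a)], and using [w c_a = c_{w(a)} w], this moves
   the first Clifford factor of [w c_a P] from [a] to [w(a)], up to sign.  Since
   [w] is an n-cycle, [c_a] can thus be moved onto the next factor [c_b] of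
   [c_I], where [c_b c_b = 1] cancels both; as [|I|] is even, [w c_I] reduces
   to [+-w]. *)

Section CommutatorSpan.
Variable A : algType Cplx.

Lemma in_comm_span0 : in_comm_span (0 : A).
Proof. by exists [::]; rewrite big_nil. Qed.

Lemma in_comm_spanD (a b : A) :
  in_comm_span a -> in_comm_span b -> in_comm_span (a + b).
Proof. by move=> [s ->] [t ->]; exists (s ++ t); rewrite big_cat. Qed.

Lemma in_comm_spanZ (k : Cplx) (a : A) : in_comm_span a -> in_comm_span (k *: a).
Proof.
move=> [s ->]; exists [seq (k * t.1.1, t.1.2, t.2) | t <- s].
by rewrite scaler_sumr big_map; apply: eq_bigr => t _; rewrite scalerA.
Qed.

Lemma in_comm_span_sign (k : nat) (a : A) :
  in_comm_span a -> in_comm_span ((-1) ^+ k * a).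
Proof.
rewrite -signr_odd mulr_sign; case: ifP => // _ /(in_comm_spanZ (-1)).
by rewrite scaleN1r.
Qed.

Lemma in_comm_span_commutator (a b : A) : in_comm_span (a * b - b * a).
Proof. by exists [:: (1, a, b)]; rewrite big_seq1 scale1r. Qed.

Definition comm_eq (a b : A) := in_comm_span (a - b).

Lemma comm_eq_refl (a : A) : comm_eq a a.
Proof. by rewrite /comm_eq subrr; apply: in_comm_span0. Qed.

Lemma comm_eq_trans (a b d : A) : comm_eq a b -> comm_eq b d -> comm_eq a d.
Proof. by move=> ab bd; have := in_comm_spanD ab bd; rewrite addrA subrK. Qed.

Lemma comm_eq_sign (k : nat) (a b : A) :
  comm_eq a b -> comm_eq ((-1) ^+ k * a) ((-1) ^+ k * b).
Proof. by rewrite /comm_eq -mulrBr; apply: in_comm_span_sign. Qed.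

Lemma comm_eq_conj (e a : A) : e * e = 1 -> comm_eq a (e * a * e).
Proof.
move=> ee; rewrite /comm_eq -[a in a - _]mulr1 -ee !mulrA -(mulrA e).
exact: in_comm_span_commutator.
Qed.

End CommutatorSpan.

Section AnticommutingProducts.
Variables (R : pzRingType) (T : eqType) (c : T -> R).
Hypothesis c_anti : forall i j, i != j -> c i * c j = - (c j * c i).

Lemma prod_anticomm (s : seq T) (i : T) :
  (\prod_(j <- s) c j) * c i
    = (-1) ^+ count (predC1 i) s * (c i * \prod_(j <- s) c j).
Proof.
elim: s => [|q s IHs]; first by rewrite !big_nil mul1r mulr1 expr0 mul1r.
rewrite !big_cons -mulrA IHs (mulrA (c q)) (commr_sign (c q)) -mulrA /=.
rewrite addnC exprD -mulrA; congr (_ * _); rewrite !mulrA.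
case: (eqVneq q i) => [-> | qi]; first by rewrite mul1r.
by rewrite expr1 mulN1r c_anti // !mulNr.
Qed.

End AnticommutingProducts.

Section CycleConjugation.
Variables (A : algType Cplx) (T : finType) (p : {perm T}) (w : A) (c : T -> A).
Hypothesis c_sq : forall i, c i * c i = 1.
Hypothesis c_anti : forall i j, i != j -> c i * c j = - (c j * c i).
Hypothesis w_c : forall i, w * c i = c (p i) * w.
Hypothesis p_transitive : forall a b, exists m, (p ^+ m)%g a = b.

Local Notation cprod s := (\prod_(j <- s) c j).

Lemma comm_eq_shift_clifford (a : T) (s : seq T) : exists k,
  comm_eq (w * (c a * cprod s)) ((-1) ^+ k * (w * (c (p a) * cprod s))).
Proof.
exists (count (predC1 (p a)) s).
apply: comm_eq_trans (comm_eq_conj _ (c_sq (p a))) _.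
rewrite (mulrA w) w_c !mulrA c_sq mul1r -!mulrA prod_anticomm //.
by rewrite (mulrA w) (commr_sign w) -mulrA; apply: comm_eq_refl.
Qed.

Lemma comm_eq_shift_clifford_iter (m : nat) (a : T) (s : seq T) : exists k,
  comm_eq (w * (c a * cprod s))
          ((-1) ^+ k * (w * (c ((p ^+ m)%g a) * cprod s))).
Proof.
elim: m => [|m [k IHm]].
  by exists 0%N; rewrite expg0 perm1 expr0 mul1r; apply: comm_eq_refl.
have [l shift] := comm_eq_shift_clifford ((p ^+ m)%g a) s.
exists (k + l)%N; rewrite expgSr permM exprD -mulrA.
exact: comm_eq_trans IHm (comm_eq_sign k shift).
Qed.

Lemma comm_eq_cycle_even_clifford (s : seq T) : ~~ odd (size s) ->
  exists k, comm_eq (w * cprod s) ((-1) ^+ k * w).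
Proof.
have [m] := ubnP (size s); elim: m s => // m IHm [|a [|b t]] //= size_lt even_s.
  by exists 0%N; rewrite big_nil mulr1 expr0 mul1r; apply: comm_eq_refl.
have [l reduce_t] : exists l, comm_eq (w * cprod t) ((-1) ^+ l * w).
  by apply: IHm; [exact: ltnW size_lt | rewrite negbK in even_s].
have [m' pma] := p_transitive a b.
have [k move_a] := comm_eq_shift_clifford_iter m' a (b :: t).
exists (k + l)%N; rewrite big_cons exprD -mulrA.
apply: comm_eq_trans move_a (comm_eq_sign k _).
by rewrite pma big_cons (mulrA (c b)) c_sq mul1r.
Qed.

End CycleConjugation.

Lemma ncycle_expE (n m : nat) (a : 'I_n) :
  val ((ncycle n ^+ m)%g a) = ((a + m) %% n)%N.
Proof.
elim: m => [|m IHm]; first by rewrite expg0 perm1 addn0 modn_small.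
by rewrite expgSr permM permE /= IHm -addn1 modnDml addn1 addnS.
Qed.

Lemma ncycle_transitive (n : nat) (a b : 'I_n) :
  exists m, (ncycle n ^+ m)%g a = b.
Proof.
exists (b + (n - a))%N; apply: val_inj; rewrite ncycle_expE.
by rewrite addnCA subnKC ?(ltnW (ltn_ord a)) // modnDr modn_small.
Qed.

Theorem lemma3p1p2 (n : nat) (u : Cplx) (A : algType Cplx)
  (x c : 'I_n -> A) (sigma : {perm 'I_n} -> A) :
  HC_relations u x c sigma ->
  forall I : {set 'I_n}, ~~ odd #|I| ->
  exists eps : Cplx, (eps = 1 \/ eps = -1) /\
    in_comm_span (sigma (ncycle n) * cI c I - eps *: sigma (ncycle n)).
Proof.
move=> [_ [c_sq [c_anti [_ [_ [_ [_ [sigma_c _]]]]]]]] I even_I.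
have cIE : cI c I = \prod_(i <- enum I) c i.
  by rewrite /cI -big_filter deprecated_filter_index_enum.
have [|k reduce] := comm_eq_cycle_even_clifford c_sq c_anti (sigma_c (ncycle n))
  (@ncycle_transitive n) (s := enum I); first by rewrite -cardE.
exists ((-1) ^+ odd k); split; first by case: (odd k); [right | left].
by rewrite cIE scaler_sign -mulr_sign signr_odd.
Qed.
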